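(* Fix $b\in\{0,1\}$ with $0<\mathbb{P}(g=1\mid y=b)<1$, and suppose $\theta\mapsto\mathbb{P}(g=1\mid x=\theta,y=b)$ on $[0,1]$ has a single crossing with the constant $\mathbb{P}(g=1\mid y=b)$, with crossing point $\theta_U$. Let $D_b(\theta)=\mathbb{P}(x\ge\theta\mid g=1,y=b)-\mathbb{P}(x\ge\theta\mid g=0,y=b)$. Then $D_b$ is nondecreasing on $[0,\theta_U]$, nonincreasing on $[\theta_U,1]$ and nonnegative on $[0,1]$. Consequently the TPR-unfairness (case $b=1$), respectively FPR-unfairness (case $b=0$), $U(\theta)=|D_b(\theta)|=D_b(\theta)$ is positively unimodal with global maximum at $\theta_U$.
   Context: $(g,x,y)$ is a random triple with group $g\in\{0,1\}$, label $y\in\{0,1\}$ and real feature $x\in[0,1]$; $x$ has a density $h_x$ strictly positive on $[0,1]$, all conditional densities of $x$ given $g$, $y$, or $(g,y)$ exist and are strictly positive on $[0,1]$, and the conditional probabilities $\theta\mapsto\mathbb{P}(y=1\mid x=\theta)$, $\mathbb{P}(g=1\mid x=\theta)$, $\mathbb{P}(g=1\mid x=\theta,y=b)$ are continuous in $\theta$; $0<\mathbb{P}(g=1)<1$ and $0<\mathbb{P}(y=1)<1$. A threshold classifier is $f_\theta(x)=\mathbb{I}[x\ge\theta]$. $\mathrm{TPR}(\theta\mid g)=\mathbb{P}(x\ge\theta\mid g,y=1)$, $\mathrm{FPR}(\theta\mid g)=\mathbb{P}(x\ge\theta\mid g,y=0)$, and $U_{\mathcal M}(\theta)=|\mathcal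 M(\theta\mid g=1)-\mathcal M(\theta\mid g=0)|$ for $\mathcal M\in\{\mathrm{TPR},\mathrm{FPR}\}$. A function $q$ on $[0,1]$ has a single crossing with a constant $v$ if there is $z\in[0,1]$ with $q(t)\le v$ for $t\le z$ and $q(t)\ge v$ for $t\ge z$ ($z$ is a crossing point). *)

From HB Require Import structures.
From mathcomp Require Import all_boot all_order all_algebra.
From mathcomp Require Import all_classical all_reals all_analysis.
Set Implicit Arguments. Unset Strict Implicit. Unset Printing Implicit Defensive.
Import Order.TTheory GRing.Theory Num.Theory.
Import numFieldNormedType.Exports.
Local Open Scope classical_set_scope.
Local Open Scope ring_scope.

(* Model of the random triple (g,x,y): [p g y] is the joint density of x
   restricted to the event {g, y}, i.e.
     P(g = a, y = c, x \in A) = \int_A p a c   for measurable A ⊆ [0,1].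
   Booleans encode {0,1}: true = 1, false = 0. *)
Section Model.
Variable R : realType.
Notation mu := (@lebesgue_measure R).
Variable p : bool -> bool -> R -> R.

Definition Pgy (a c : bool) : R := Rintegral mu `[0, 1] (p a c).
Definition Py (c : bool) : R := Pgy false c + Pgy true c.
Definition Pg (a : bool) : R := Pgy a false + Pgy a true.
Definition Pg1_y (c : bool) : R := Pgy true c / Py c.

Definition hx (t : R) : R := p false false t + p false true t + p true false t + p true true t.
Definition Py1_x (t : R) : R := (p false true t + p true true t) / hx t.
Definition Pg1_x (t : R) : R := (p true false t + p true true t) / hx t.
Definition Pg1_xy (c : bool) (t : R) : R := p true c t / (p false c t + p true c t).

Definition Pxge (a c : bool) (t : R) : R := Rintegral mu `[t, 1] (p a c) / Pgy a c.

Definition TPR (a : bool) (t : R) : R := Pxge a true t.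
Definition FPR (a : bool) (t : R) : R := Pxge a false t.
Definition Unfair (M : bool -> R -> R) (t : R) : R := `|M true t - M false t|.

Definition Dgap (c : bool) (t : R) : R := Pxge true c t - Pxge false c t.
End Model.

Definition admissible_model (R : realType) (p : bool -> bool -> R -> R) : Prop :=
  [/\ (forall a c : bool, measurable_fun `[(0:R), 1] (p a c) /\
                   (@lebesgue_measure R).-integrable `[0, 1] (EFin \o p a c)),
      (forall (a c : bool) (t : R), t \in `[0, 1] -> 0 < p a c t),
      Pgy p false false + Pgy p false true + Pgy p true false + Pgy p true true = 1,
      [/\ {within `[(0:R), 1], continuous (Py1_x p)},
          {within `[(0:R), 1], continuous (Pg1_x p)} &
          (forall c, {within `[(0:R), 1], continuous (Pg1_xy p c)})] &
      (0 < Pg p true < 1) /\ (0 < Py p true < 1)].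

Definition crossing_point (R : realType) (q : R -> R) (v z : R) : Prop :=
  z \in `[(0:R), 1] /\
  forall t, t \in `[0, 1] -> (t <= z -> q t <= v) /\ (z <= t -> v <= q t).

(* Write f_a for the density of x given (g = a, y = b), i.e. p a b / P(g = a, y = b).
   Then D_b(s) - D_b(t) is the integral of f_1 - f_0 over [s, t[, and
   f_1(x) <= f_0(x) exactly when P(g = 1 | x, y = b) <= P(g = 1 | y = b).  The
   single crossing therefore makes D_b increase up to theta_U and decrease
   after it; since D_b(0) = D_b(1) = 0 it is nonnegative, so U = |D_b| = D_b. *)
From HB Require Import structures.
From mathcomp Require Import all_boot all_order all_algebra.
From mathcomp Require Import all_classical all_reals all_analysis.
From mathcomp Require Import lra.
Set Implicit Arguments. Unset Strict Implicit.
Import Order.TTheory GRing.Theory Num.Theory.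
Local Open Scope classical_set_scope.
Local Open Scope ring_scope.

Lemma ler_share_ratio (R : realFieldType) (a0 a1 q0 q1 : R) :
  0 < a0 -> 0 < a1 -> 0 < q0 -> 0 < q1 ->
  (a1 / (a0 + a1) <= q1 / (q0 + q1)) = (a1 / q1 <= a0 / q0).
Proof.
move=> a0_gt0 a1_gt0 q0_gt0 q1_gt0.
rewrite ler_pdivrMr ?addr_gt0 // mulrAC ler_pdivlMr ?addr_gt0 //.
rewrite ler_pdivrMr // mulrAC ler_pdivlMr //.
by rewrite !mulrDr [q1 * a1]mulrC lerD2r [q1 * a0]mulrC.
Qed.

Lemma share_ratio_gt0_lt1 (R : realFieldType) (q0 q1 : R) :
  0 <= q0 -> 0 <= q1 -> 0 < q1 / (q0 + q1) < 1 -> 0 < q0 /\ 0 < q1.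
Proof.
move=> q0_ge0 q1_ge0 /andP[ratio_gt0 ratio_lt1].
have q1_gt0 : 0 < q1.
  rewrite lt_neqAle q1_ge0 andbT.
  by apply: contraTneq ratio_gt0 => <-; rewrite mul0r ltxx.
split=> //.
by move: ratio_lt1; rewrite ltr_pdivrMr ?ltr_wpDl // mul1r ltrDr.
Qed.

Lemma Rintegral_le0 d (T : measurableType d) (R : realType)
    (mu : measure T R) (D : set T) (f : T -> R) :
  measurable D -> mu.-integrable D (EFin \o f) ->
  (forall x, D x -> f x <= 0) -> \int[mu]_(x in D) f x <= 0.
Proof.
move=> mD If f_le0; rewrite -oppr_ge0 -mulrN1 -RintegralZr //.
by apply: Rintegral_ge0 => x Dx; rewrite mulrN1 oppr_ge0 f_le0.
Qed.

Section IntervalIntegrals.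
Variable R : realType.
Notation mu := (@lebesgue_measure R).

Lemma Rintegral_itv_split (f : R -> R) (s t u : R) : s <= t -> t <= u ->
  mu.-integrable `[s, u] (EFin \o f) ->
  Rintegral mu `[s, u] f = Rintegral mu `[s, t[ f + Rintegral mu `[t, u] f.
Proof.
move=> st tu If.
rewrite (@itv_bndbnd_setU _ _ _ (BLeft t)) ?bnd_simp //.
rewrite Rintegral_setU //; first by rewrite -itv_bndbnd_setU ?bnd_simp.
apply/disj_setPS => x /= [].
by rewrite !in_itv /= => /andP[_ xt] /andP[tx _]; rewrite ltNge tx in xt.
Qed.

Lemma Rintegral_itv_sub (f : R -> R) (s t u : R) : s <= t -> t <= u ->
  mu.-integrable `[s, u] (EFin \o f) ->
  Rintegral mu `[s, u] f - Rintegral mu `[t, u] f = Rintegral mu `[s, t[ f.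
Proof. by move=> st tu If; rewrite (Rintegral_itv_split st tu If) addrK. Qed.

End IntervalIntegrals.

Lemma crossing_point_in01 (R : realType) (q : R -> R) (v z : R) :
  crossing_point q v z -> 0 <= z /\ z <= 1.
Proof. by case; rewrite in_itv /= => /andP[]. Qed.

Section ConditionalTails.
Variables (R : realType) (p : bool -> bool -> R -> R).

Lemma Pgy_ge0 (a c : bool) : (forall t, t \in `[0, 1] -> 0 <= p a c t) ->
  0 <= Pgy p a c.
Proof. by move=> p_ge0; apply: Rintegral_ge0 => t /p_ge0. Qed.

Lemma Pxge0 (a c : bool) : Pgy p a c != 0 -> Pxge p a c 0 = 1.
Proof. exact: divff. Qed.

Lemma Pxge1 (a c : bool) : Pxge p a c 1 = 0.
Proof. by rewrite /Pxge set_itv1 Rintegral_set1 mul0r. Qed.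

End ConditionalTails.

Section Gap.
Variables (R : realType) (p : bool -> bool -> R -> R) (b : bool).
Notation mu := (@lebesgue_measure R).
Hypothesis p_integrable : forall a, mu.-integrable `[0, 1] (EFin \o p a b).
Hypothesis p_gt0 : forall a t, t \in `[0, 1] -> 0 < p a b t.
Hypothesis Pgy_gt0 : forall a, 0 < Pgy p a b.

Definition gap_density (t : R) : R :=
  p true b t / Pgy p true b - p false b t / Pgy p false b.

Let integrable_cc (a : bool) (s t : R) : 0 <= s -> t <= 1 ->
  mu.-integrable `[s, t] (EFin \o p a b).
Proof.
move=> s0 t1; apply: integrableS (p_integrable a) => //.
by apply: subset_itv; rewrite bnd_simp.
Qed.

Let integrable_co (a : bool) (s t : R) : 0 <= s -> t <= 1 ->
  mu.-integrable `[s, t[ (EFin \o p a b).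
Proof.
move=> s0 t1; apply: integrableS (integrable_cc a s0 t1) => //.
by apply: subset_itvl; rewrite bnd_simp.
Qed.

Lemma Pxge_sub (a : bool) (s t : R) : 0 <= s -> s <= t -> t <= 1 ->
  Pxge p a b s - Pxge p a b t = Rintegral mu `[s, t[ (fun x => p a b x / Pgy p a b).
Proof.
move=> s0 st t1.
by rewrite /Pxge -mulrBl Rintegral_itv_sub ?RintegralZr ?integrable_co ?integrable_cc.
Qed.

Lemma normalized_density_integrable (a : bool) (s t : R) : 0 <= s -> t <= 1 ->
  mu.-integrable `[s, t[ (EFin \o (fun x => p a b x / Pgy p a b)).
Proof.
move=> s0 t1; exact: (integrableZr _ (Pgy p a b)^-1 (integrable_co a s0 t1)).
Qed.

Lemma gap_density_integrable (s t : R) : 0 <= s -> t <= 1 ->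
  mu.-integrable `[s, t[ (EFin \o gap_density).
Proof.
move=> s0 t1.
exact: (integrableB _ (normalized_density_integrable true s0 t1)
                      (normalized_density_integrable false s0 t1)).
Qed.

Lemma Dgap_sub (s t : R) : 0 <= s -> s <= t -> t <= 1 ->
  Dgap p b s - Dgap p b t = Rintegral mu `[s, t[ gap_density.
Proof.
move=> s0 st t1.
rewrite /gap_density RintegralB ?normalized_density_integrable //.
by rewrite -!Pxge_sub // /Dgap; lra.
Qed.

Lemma gap_density_le0 (t : R) : t \in `[0, 1] ->
  Pg1_xy p b t <= Pg1_y p b -> gap_density t <= 0.
Proof.
move=> t01; rewrite /Pg1_xy /Pg1_y /Py ler_share_ratio ?p_gt0 //.
by rewrite /gap_density subr_le0.
Qed.

Lemma gap_density_ge0 (t : R) : t \in `[0, 1] ->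
  Pg1_y p b <= Pg1_xy p b t -> 0 <= gap_density t.
Proof.
move=> t01; rewrite /Pg1_xy /Pg1_y /Py ler_share_ratio ?p_gt0 //.
rewrite -lef_pV2 ?posrE ?divr_gt0 ?p_gt0 // !invf_div.
by rewrite /gap_density subr_ge0.
Qed.

Lemma Dgap0 : Dgap p b 0 = 0.
Proof. by rewrite /Dgap !Pxge0 ?subrr ?gt_eqF. Qed.

Lemma Dgap1 : Dgap p b 1 = 0.
Proof. by rewrite /Dgap !Pxge1 subrr. Qed.

Variable thetaU : R.
Hypothesis crossing : crossing_point (Pg1_xy p b) (Pg1_y p b) thetaU.

Let thetaU_ge0 : 0 <= thetaU := (crossing_point_in01 crossing).1.
Let thetaU_le1 : thetaU <= 1 := (crossing_point_in01 crossing).2.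

Lemma Dgap_nondecreasing (s t : R) : 0 <= s -> s <= t -> t <= thetaU ->
  Dgap p b s <= Dgap p b t.
Proof.
move=> s0 st tU; have t1 := le_trans tU thetaU_le1.
rewrite -subr_le0 Dgap_sub //; apply: Rintegral_le0 => //.
  exact: gap_density_integrable.
move=> x /=; rewrite in_itv /= => /andP[sx xt].
have x01 : x \in `[0, 1] by rewrite in_itv /= (le_trans s0 sx) (le_trans (ltW xt) t1).
apply: gap_density_le0 => //; apply: (crossing.2 x x01).1.
exact: le_trans (ltW xt) tU.
Qed.

Lemma Dgap_nonincreasing (s t : R) : thetaU <= s -> s <= t -> t <= 1 ->
  Dgap p b t <= Dgap p b s.
Proof.
move=> Us st t1; have s0 := le_trans thetaU_ge0 Us.
rewrite -subr_ge0 Dgap_sub //; apply: Rintegral_ge0.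
move=> x /=; rewrite in_itv /= => /andP[sx xt].
have x01 : x \in `[0, 1] by rewrite in_itv /= (le_trans s0 sx) (le_trans (ltW xt) t1).
apply: gap_density_ge0 => //; apply: (crossing.2 x x01).2.
exact: le_trans Us sx.
Qed.

Lemma Dgap_ge0 (t : R) : 0 <= t -> t <= 1 -> 0 <= Dgap p b t.
Proof.
move=> t0 t1; have [tU | Ut] := leP t thetaU.
  by rewrite -Dgap0; apply: Dgap_nondecreasing.
by rewrite -Dgap1; apply: Dgap_nonincreasing => //; apply: ltW.
Qed.

Lemma Dgap_le_thetaU (t : R) : 0 <= t -> t <= 1 -> Dgap p b t <= Dgap p b thetaU.
Proof.
move=> t0 t1; have [tU | Ut] := leP t thetaU.
  exact: Dgap_nondecreasing.
by apply: Dgap_nonincreasing => //; apply: ltW.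
Qed.

End Gap.

Lemma Unfair_Dgap (R : realType) (p : bool -> bool -> R -> R) (b : bool) (t : R) :
  Unfair (if b then TPR p else FPR p) t = `|Dgap p b t|.
Proof. by case: b. Qed.

Theorem mainTheorem4 (R : realType) (p : bool -> bool -> R -> R) (b : bool)
  (thetaU : R) :
  admissible_model p ->
  0 < Pg1_y p b < 1 ->
  crossing_point (Pg1_xy p b) (Pg1_y p b) thetaU ->
  let D := Dgap p b in
  let U := Unfair (if b then TPR p else FPR p) in
  [/\ (forall s t, 0 <= s -> s <= t -> t <= thetaU -> D s <= D t),
      (forall s t, thetaU <= s -> s <= t -> t <= 1 -> D t <= D s),
      (forall t, 0 <= t -> t <= 1 -> 0 <= D t),
      (forall t, 0 <= t -> t <= 1 -> U t = D t) &
      (forall t, 0 <= t -> t <= 1 -> U t <= U thetaU)].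
Proof.
move=> [p_meas_int p_gt0 _ _ _] Pg1_y_bounds crossing D U.
have p_int a : (@lebesgue_measure R).-integrable `[0, 1] (EFin \o p a b).
  by case: (p_meas_int a b).
have Pgy_gt0 a : 0 < Pgy p a b.
  have [||P0_gt0 P1_gt0] := share_ratio_gt0_lt1 _ _ Pg1_y_bounds;
    try by apply: Pgy_ge0 => t /p_gt0 /ltW.
  by case: a.
have pb_gt0 a := p_gt0 a b.
have D_ge0 := Dgap_ge0 p_int pb_gt0 Pgy_gt0 crossing.
have UD t : 0 <= t -> t <= 1 -> U t = D t.
  by move=> t0 t1; rewrite /U Unfair_Dgap ger0_norm ?D_ge0.
rewrite /D; split=> [s t|s t|t||t t0 t1] //.
- exact: (Dgap_nondecreasing p_int pb_gt0 Pgy_gt0 crossing).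
- exact: (Dgap_nonincreasing p_int pb_gt0 Pgy_gt0 crossing).
- exact: D_ge0.
have [thetaU_ge0 thetaU_le1] := crossing_point_in01 crossing.
by rewrite !UD //; apply: (Dgap_le_thetaU p_int pb_gt0 Pgy_gt0 crossing).
Qed.
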